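(* Let $\circ$ be a binary operation on $L$ and consider: (C1) $a\circ b=a\vee b$ for all $a,b\in L^+$; (C2) $a\circ(-a)=\mathbb{O}$ for all $a\in L$; (C3) $-(a\circ b)=(-a)\circ(-b)$ for all $a,b\in L$; (C3+) $-(a\circ b)=(-a)\circ(-b)$ for all $a,b\in L^+$. Then: (0) if $\circ$ satisfies (C1) and (C2), then $\circ$ is not associative; (1) if $\circ$ satisfies (C1), (C2), (C3), then there is no such $\circ$ for which the set $A(\circ)=\{(a,b,c)\in L^3:(a\circ b)\circ c=a\circ(b\circ c)\}$ strictly contains $A(\oplus)$, where $\oplus$ is the symmetric maximum; (2) if $\circ$ satisfies (C1) and (C3+), then $\mathbb{O}$ is a neutral element of $\circ$; if moreover $\circ$ is associative then $|a\circ(-a)|\ge|a|$ for all $a\in L$; and if moreover $\circ$ is isotone then $|a\circ(-a)|=|a|$.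
   Context: Let $(L^+,\le)$ be a totally ordered set with bottom $\mathbb{O}$ and top $\mathbb{1}\neq\mathbb{O}$. Let $L^-=\{-a:a\in L^+\}$ be a disjoint copy of $L^+$ with reversed order ($-a\le-b$ iff $b\le a$), and $L=L^+\cup L^-$ with $-\mathbb{O}$ identified with $\mathbb{O}$, totally ordered so that every element of $L^-$ lies below every element of $L^+$; $-(-a)=a$; $|a|=a$ for $a\in L^+$, $|a|=-a$ otherwise. The symmetric maximum is $a\oplus b=\mathbb{O}$ if $b=-a$, and otherwise the one of $a,b$ with larger absolute value. Isotone means $a\le a'$, $b\le b'$ imply $a\circ b\le a'\circ b'$. *)

From HB Require Import structures.
From mathcomp Require Import all_boot all_order.
Set Implicit Arguments. Unset Strict Implicit. Unset Printing Implicit Defensive.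
Import Order.TTheory.
Local Open Scope order_scope.

(* L^+ is a totally ordered set T with bottom \bot (= 𝕆) and top \top (= 𝟙).
   L = L^+ ∪ L^- is represented by pairs (s, a) : bool * T, where s = true
   means "negative", subject to the normalization that -𝕆 = 𝕆, i.e. the
   pair (true, \bot) is excluded. *)
Section SymL.
Context {d : Order.disp_t} {T : tbOrderType d}.

Definition symL := {x : bool * T | ~~ x.1 || (x.2 != \bot)}.

Lemma mk_proof (s : bool) (a : T) :
  ~~ (s && (a != \bot), a).1 || ((s && (a != \bot), a).2 != \bot).
Proof. by case: s; case: (a != \bot). Qed.

Definition mk (s : bool) (a : T) : symL := exist _ (s && (a != \bot), a) (mk_proof s a).

Definition posL (a : T) : symL := mk false a.

Definition zeroL : symL := posL \bot.

Definition oppL (x : symL) : symL := mk (~~ (val x).1) (val x).2.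

Definition absL (x : symL) : T := (val x).2.

Definition leL (x y : symL) : bool :=
  match (val x).1, (val y).1 with
  | false, false => (val x).2 <= (val y).2
  | true, true => (val y).2 <= (val x).2
  | true, false => true
  | false, true => false
  end.

Definition smax (x y : symL) : symL :=
  if y == oppL x then zeroL
  else if absL x < absL y then y else x.

Definition C1 (o : symL -> symL -> symL) : Prop :=
  forall a b : T, o (posL a) (posL b) = posL (Order.max a b).
Definition C2 (o : symL -> symL -> symL) : Prop :=
  forall a : symL, o a (oppL a) = zeroL.
Definition C3 (o : symL -> symL -> symL) : Prop :=
  forall a b : symL, oppL (o a b) = o (oppL a) (oppL b).
Definition C3plus (o : symL -> symL -> symL) : Prop :=
  forall a b : T, oppL (o (posL a) (posL b)) = o (oppL (posL a)) (oppL (posL b)).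

Definition associative_op (o : symL -> symL -> symL) : Prop :=
  forall a b c : symL, o (o a b) c = o a (o b c).

Definition isotone_op (o : symL -> symL -> symL) : Prop :=
  forall a a' b b' : symL, leL a a' -> leL b b' -> leL (o a b) (o a' b').

Definition assoc_triples (o : symL -> symL -> symL) (t : symL * symL * symL) : Prop :=
  o (o t.1.1 t.1.2) t.2 = o t.1.1 (o t.1.2 t.2).

Definition strictly_contains_smax_triples (o : symL -> symL -> symL) : Prop :=
  (forall t, assoc_triples smax t -> assoc_triples o t) /\
  (exists t, assoc_triples o t /\ ~ assoc_triples smax t).

Definition neutral_elem (o : symL -> symL -> symL) (e : symL) : Prop :=
  forall a : symL, o e a = a /\ o a e = a.

End SymL.

(* Under (C1) and (C2), the triple (1, 1, -1) breaks associativity: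
   (1 ∘ 1) ∘ (-1) = 1 ∘ (-1) = 𝕆, whereas 1 ∘ (1 ∘ (-1)) = 1 ∘ 𝕆 = 1.
   Under (C1), (C2), (C3), requiring A(⊕) ⊆ A(∘) forces ∘ = ⊕: on elements of
   distinct absolute values, the ⊕-associative triples (-b, b, a) and
   (a, b, -b) with b < a pin down -b ∘ a = a and a ∘ -b = a, and (C3)
   transports these to the remaining sign patterns; so no associative triple
   can be gained.
   Under (C1) and (C3+), ∘ is the maximum on L^+ and the minimum on L^-, which
   makes 𝕆 neutral and ∘ idempotent.  If ∘ is associative, idempotence makes
   c := a ∘ (-a) a fixed point of a ∘ _ and of _ ∘ (-a), and whichever of
   a, -a has the sign of c then bounds |c| from below.  If ∘ is isotone,
   c lies between (-|a|) ∘ (-|a|) = -|a| and |a| ∘ |a| = |a|. *)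
From HB Require Import structures.
From mathcomp Require Import all_ssreflect all_order.
Set Implicit Arguments. Unset Strict Implicit. Unset Printing Implicit Defensive.
Import Order.TTheory.
Local Open Scope order_scope.

Section SymmetricMaximum.
Context {d : Order.disp_t} {T : tbOrderType d}.
Local Notation L := (@symL d T).
Local Notation negL a := (oppL (posL a)).

Lemma absL_posL (a : T) : absL (posL a) = a. Proof. by []. Qed.

Lemma absL_oppL (x : L) : absL (oppL x) = absL x. Proof. by []. Qed.

Lemma oppLK (x : L) : oppL (oppL x) = x.
Proof.
case: x => [[[] a] /= p]; apply: val_inj => /=; first by rewrite p.
by case: (a != \bot).
Qed.

Lemma oppL_zero : negL (\bot : T) = zeroL.
Proof. by apply: val_inj; rewrite /= eqxx. Qed.

Lemma symLP (x : L) : x = posL (absL x) \/ x = negL (absL x).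
Proof.
case: x => [[[] a] /= p]; [right | left]; apply: val_inj => //=.
by rewrite p.
Qed.

Lemma posL_inj : injective (@posL d T).
Proof. by move=> a b /(congr1 absL). Qed.

Lemma eq_oppL_zero (x : L) : x = oppL x -> x = zeroL.
Proof.
case: x => [[[] a] p] /(congr1 val) //= [].
by case: eqP => // -> _; apply: val_inj.
Qed.

Lemma eq_absL (x y : L) : absL x = absL y -> y = x \/ y = oppL x.
Proof.
move=> xy; case: (symLP x) (symLP y) => -> [] ->; rewrite xy ?oppLK;
  by [left | right].
Qed.

Lemma smax_absl_lt (x y : L) : absL x < absL y -> smax x y = y.
Proof.
move=> lt_xy; rewrite /smax ifN ?lt_xy //.
by apply: contraTN lt_xy => /eqP ->; rewrite absL_oppL ltxx.
Qed.

Lemma smax_absr_lt (x y : L) : absL y < absL x -> smax x y = x.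
Proof.
move=> lt_yx; rewrite /smax ifN; first by rewrite ltNge (ltW lt_yx).
by apply: contraTN lt_yx => /eqP ->; rewrite absL_oppL ltxx.
Qed.

Lemma smaxxx (x : L) : smax x x = x.
Proof.
by rewrite /smax ltxx; case: eqP => // /eq_oppL_zero ->.
Qed.

Lemma smax_oppr (x : L) : smax x (oppL x) = zeroL.
Proof. by rewrite /smax eqxx. Qed.

Lemma smax_oppl (x : L) : smax (oppL x) x = zeroL.
Proof. by rewrite -{2}[x]oppLK smax_oppr. Qed.

Lemma eq_smax (o : L -> L -> L) :
    (forall x y, absL x < absL y -> o x y = y) ->
    (forall x y, absL y < absL x -> o x y = x) ->
    (forall x, o x x = x) -> (forall x, o x (oppL x) = zeroL) ->
  forall x y, o x y = smax x y.
Proof.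
move=> o_lt o_gt o_idem o_opp x y.
case: (ltgtP (absL x) (absL y)) => [lt_xy | lt_yx | /eq_absL [] ->].
- by rewrite o_lt ?smax_absl_lt.
- by rewrite o_gt ?smax_absr_lt.
- by rewrite o_idem smaxxx.
- by rewrite o_opp smax_oppr.
Qed.

Lemma leL_absL (x : L) : leL (negL (absL x)) x /\ leL x (posL (absL x)).
Proof.
by case: x => [[[] a] /= p]; rewrite /leL /= ?p ?lexx //; case: (a != \bot).
Qed.

Lemma leL_absL_bound (e : T) (c : L) :
  leL (negL e) c -> leL c (posL e) -> absL c <= e.
Proof. by case: c => [[[] f] p]; rewrite /leL /absL /=; case: (e != \bot). Qed.

Section Operation.
Variable o : L -> L -> L.
Hypothesis o_C1 : C1 o.

Lemma op_zerol_posL (a : T) : o zeroL (posL a) = posL a.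
Proof. by rewrite o_C1 (max_r (le0x a)). Qed.

Lemma op_posL_zeror (a : T) : o (posL a) zeroL = posL a.
Proof. by rewrite o_C1 (max_l (le0x a)). Qed.

Lemma C1_C2_not_associative : (\bot : T) != \top -> C2 o -> ~ associative_op o.
Proof.
move=> bot_neq_top o_C2 o_assoc.
have := o_assoc (posL \top) (posL \top) (negL \top).
rewrite o_C1 maxxx o_C2 op_posL_zeror => /posL_inj top_bot.
by rewrite top_bot eqxx in bot_neq_top.
Qed.

Section SignSymmetric.
Hypothesis o_C3plus : C3plus o.

Lemma op_negL (a b : T) : o (negL a) (negL b) = negL (Order.max a b).
Proof. by rewrite -o_C3plus o_C1. Qed.

Lemma op_idem (x : L) : o x x = x.
Proof. by case: (symLP x) => ->; rewrite ?o_C1 ?op_negL maxxx. Qed.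

Lemma op_zero_neutral : neutral_elem o zeroL.
Proof.
move=> x; case: (symLP x) => ->; first by rewrite op_zerol_posL op_posL_zeror.
by rewrite -oppL_zero !op_negL (max_r (le0x _)) (max_l (le0x _)).
Qed.

Section Associative.
Hypothesis o_assoc : associative_op o.

Lemma op_fixl (x y : L) : o x (o x y) = o x y.
Proof. by rewrite -o_assoc op_idem. Qed.

Lemma op_fixr (x y : L) : o (o x y) y = o x y.
Proof. by rewrite o_assoc op_idem. Qed.

Lemma le_absL_fixed (e : T) (c : L) :
  c = o (posL e) c \/ c = o c (posL e) ->
  c = o (negL e) c \/ c = o c (negL e) -> e <= absL c.
Proof.
case: (symLP c) => -> fix_pos fix_neg.
  by case: fix_pos => ->; rewrite o_C1 absL_posL le_max lexx ?orbT.
by case: fix_neg => ->; rewrite op_negL absL_oppL absL_posL le_max lexx ?orbT.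
Qed.

Lemma le_absL_op_oppr (x : L) : absL x <= absL (o x (oppL x)).
Proof.
have fixl := esym (op_fixl x (oppL x)); have fixr := esym (op_fixr x (oppL x)).
set c := o x (oppL x) in fixl fixr *.
by case: (symLP x) => xE; rewrite xE ?oppLK in fixl fixr;
  apply: le_absL_fixed; auto.
Qed.

End Associative.

Lemma isotone_absL_op_oppr (x : L) :
  isotone_op o -> absL (o x (oppL x)) <= absL x.
Proof.
move=> o_iso; have [lo_x hi_x] := leL_absL x.
have [lo_ox hi_ox] := leL_absL (oppL x); rewrite absL_oppL in lo_ox hi_ox.
apply: leL_absL_bound.
  by rewrite -[negL _]op_idem; apply: o_iso.
by rewrite -[posL _]op_idem; apply: o_iso.
Qed.

End SignSymmetric.

Section ContainsSmaxTriples.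
Hypotheses (o_C2 : C2 o) (o_C3 : C3 o).
Hypothesis smax_triples_sub : forall t, assoc_triples smax t -> assoc_triples o t.

Lemma op_oppl (x : L) : o (oppL x) x = zeroL.
Proof. by rewrite -{2}[x]oppLK o_C2. Qed.

Lemma op_absl_lt_posL (x : L) (a : T) : absL x < a -> o x (posL a) = posL a.
Proof.
case: (symLP x) => -> lt_xa; set b := absL x in lt_xa *.
  by rewrite o_C1 (max_r (ltW lt_xa)).
have sm : assoc_triples smax (negL b, posL b, posL a).
  by rewrite /assoc_triples /= smax_oppl !smax_absl_lt // (le_lt_trans (le0x b)).
move: (smax_triples_sub sm); rewrite /assoc_triples /=.
by rewrite op_oppl op_zerol_posL o_C1 (max_r (ltW lt_xa)).
Qed.

Lemma op_posL_absr_lt (y : L) (a : T) : absL y < a -> o (posL a) y = posL a.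
Proof.
case: (symLP y) => -> lt_ya; set b := absL y in lt_ya *.
  by rewrite o_C1 (max_l (ltW lt_ya)).
have sm : assoc_triples smax (posL a, posL b, negL b).
  by rewrite /assoc_triples /= smax_oppr !smax_absr_lt // (le_lt_trans (le0x b)).
move: (smax_triples_sub sm); rewrite /assoc_triples /=.
by rewrite o_C2 op_posL_zeror o_C1 (max_l (ltW lt_ya)).
Qed.

Lemma op_absl_lt (x y : L) : absL x < absL y -> o x y = y.
Proof.
case: (symLP y) => -> lt_xy; first exact: op_absl_lt_posL.
by rewrite -[x]oppLK -o_C3 op_absl_lt_posL.
Qed.

Lemma op_absr_lt (x y : L) : absL y < absL x -> o x y = x.
Proof.
case: (symLP x) => -> lt_yx; first exact: op_posL_absr_lt.
by rewrite -[y]oppLK -o_C3 op_posL_absr_lt.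
Qed.

Lemma op_eq_smax (x y : L) : o x y = smax x y.
Proof.
apply: eq_smax => //; [exact: op_absl_lt | exact: op_absr_lt |].
by apply: op_idem => a b; apply: o_C3.
Qed.

End ContainsSmaxTriples.
End Operation.
End SymmetricMaximum.

Theorem proposition2 (d : Order.disp_t) (T : tbOrderType d)
  (hbt : (\bot : T) != \top) :
  (* (0) *)
  (forall o : @symL d T -> @symL d T -> @symL d T, C1 o -> C2 o -> ~ associative_op o) /\
  (* (1) *)
  (forall o : @symL d T -> @symL d T -> @symL d T, C1 o -> C2 o -> C3 o ->
     ~ strictly_contains_smax_triples o) /\
  (* (2) *)
  (forall o : @symL d T -> @symL d T -> @symL d T, C1 o -> C3plus o ->
     neutral_elem o (zeroL (T := T)) /\
     (associative_op o ->
        (forall a : @symL d T, absL a <= absL (o a (oppL a))) /\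
        (isotone_op o -> forall a : @symL d T, absL (o a (oppL a)) = absL a))).
Proof.
split; first by move=> o o_C1 o_C2; exact: C1_C2_not_associative.
split.
  move=> o o_C1 o_C2 o_C3 [sub [t [o_t not_smax_t]]]; apply: not_smax_t.
  by move: o_t; rewrite /assoc_triples !(op_eq_smax o_C1 o_C2 o_C3 sub).
move=> o o_C1 o_C3plus; split; first exact: op_zero_neutral.
move=> o_assoc; split; first exact: le_absL_op_oppr.
move=> o_iso a; apply/le_anti.
by rewrite isotone_absL_op_oppr // le_absL_op_oppr.
Qed.
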